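(* Let $\Omega_n=\dfrac{\pi^{n/2}}{\Gamma\left(\frac n2+1\right)}$ for $n\in\mathbb{N}_0$, and \[ a(n)=\frac12\ln\frac{n}{2\pi}+\frac1{4n}-\frac1{24n^3}+\frac1{20n^5}-\frac{17}{112n^7},\qquad b(n)=a(n)+\frac{31}{36n^9}. \] Then for every $n\in\mathbb{N}$, \[ a(n)<\ln\frac{\Omega_{n-1}}{\Omega_n}<b(n). \]
   Context: $\Omega_n$ is the volume of the unit ball in $\mathbb{R}^n$ ($\Omega_0=1$); $\Gamma$ is Euler's gamma function. *)

From Stdlib Require Import Reals.
From Coquelicot Require Import Coquelicot.
Open Scope R_scope.

Definition Gamma (x : R) : R :=
  RInt_gen (fun t => Rpower t (x - 1) * exp (- t))
           (at_right 0) (Rbar_locally p_infty).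

Definition Omega (n : nat) : R :=
  Rpower PI (INR n / 2) / Gamma (INR n / 2 + 1).

Definition a_fun (n : nat) : R :=
  let x := INR n in
  / 2 * ln (x / (2 * PI)) + 1 / (4 * x) - 1 / (24 * x ^ 3)
  + 1 / (20 * x ^ 5) - 17 / (112 * x ^ 7).

Definition b_fun (n : nat) : R := a_fun n + 31 / (36 * INR n ^ 9).

(* With Wendel_ratio x = Gamma (x+1)^2 / (x Gamma (x+1/2)^2) and
   Omega_rem n = 1/2 ln (Wendel_ratio (n/2)), one has
   ln (Omega_(n-1) / Omega_n) = 1/2 ln (n / (2 pi)) + Omega_rem n, while
   a n = 1/2 ln (n / (2 pi)) + a_corr n for an odd polynomial a_corr in 1/n.
   The functional equation of Gamma gives Wendel_ratio x / Wendel_ratio (x+1) = 1 + 1/(4x(x+1)),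
   i.e. Omega_rem n - Omega_rem (n+2) = 1/2 ln (1 + 1/(n(n+2))), and log-convexity of Gamma
   (Cauchy-Schwarz in Euler's integral) gives 1 <= Wendel_ratio x <= 1 + 1/(2x), i.e.
   0 <= Omega_rem n <= 1/(2n).  Taylor bounds for ln (1 + u) then show that
   Omega_rem - a_corr and a_corr + 31/(36 n^9) - Omega_rem strictly decrease along
   n, n+2, n+4, ...; as both are at least -1/n, they are positive. *)

From Stdlib Require Import Reals Lra Lia Psatz Classical Factorial.
From Coquelicot Require Import Coquelicot.
Open Scope R_scope.

Lemma pow_le_fact_mul_exp (t : R) (k : nat) : 0 <= t -> t ^ k <= INR (fact k) * exp t.
Proof.
  intros Ht.
  assert (Hterm : t ^ k / INR (fact k) <= exp t).
  { eapply Rle_trans; [|apply (exp_ge_taylor t k Ht)].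
    destruct k as [|k]; [simpl; lra|].
    rewrite tech5.
    assert (0 <= sum_f_R0 (fun i => t ^ i / INR (fact i)) k); [|lra].
    apply cond_pos_sum; intros i.
    apply Rdiv_le_0_compat; [apply pow_le; lra | apply INR_fact_lt_0]. }
  pose proof (INR_fact_lt_0 k).
  replace (t ^ k) with (INR (fact k) * (t ^ k / INR (fact k))) by (field; lra).
  apply Rmult_le_compat_l; lra.
Qed.

Lemma Rpower_le_pow (t y : R) (m : nat) : 1 <= t -> y <= INR m -> Rpower t y <= t ^ m.
Proof. intros Ht Hy. rewrite <- Rpower_pow by lra. apply Rle_Rpower; lra. Qed.

Lemma Rpower_le_1 (t y : R) : 0 < t <= 1 -> 0 <= y -> Rpower t y <= 1.
Proof.
  intros Ht Hy. unfold Rpower. rewrite <- exp_0.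
  assert (ln t <= 0) by (rewrite <- ln_1; apply ln_le; lra).
  destruct (Req_dec (y * ln t) 0) as [E|E]; [rewrite E; lra|].
  left; apply exp_increasing; nra.
Qed.

Lemma Rpower_le_self (t y : R) : 0 < t <= 1 -> 1 <= y -> Rpower t y <= t.
Proof.
  intros Ht Hy. replace y with (1 + (y - 1)) by ring.
  rewrite Rpower_plus, Rpower_1 by lra.
  assert (Rpower t (y - 1) <= 1) by (apply Rpower_le_1; lra).
  pose proof (exp_pos ((y - 1) * ln t)). unfold Rpower in *. nra.
Qed.

Lemma Rpower_mul_exp_le (x : R) :
  exists K, 0 <= K /\ forall t, 1 <= t -> Rpower t x * exp (- t) <= K / t ^ 2.
Proof.
  destruct (INR_archimed 1 x) as [m Hm]; [lra|].
  exists (INR (fact (m + 2))). split; [left; apply INR_fact_lt_0|].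
  intros t Ht.
  assert (Hpow : Rpower t x <= t ^ m) by (apply Rpower_le_pow; lra).
  assert (Hexp : t ^ m * t ^ 2 <= INR (fact (m + 2)) * exp t)
    by (rewrite <- pow_add; apply pow_le_fact_mul_exp; lra).
  assert (0 < t ^ 2) by (apply pow_lt; lra).
  pose proof (exp_pos t).
  apply (Rle_div_r _ _ (t ^ 2)); [lra|].
  rewrite exp_Ropp.
  replace (Rpower t x * / exp t * t ^ 2) with (Rpower t x * t ^ 2 / exp t) by (field; lra).
  apply (Rle_div_l _ _ (exp t)); [lra|].
  eapply Rle_trans; [|exact Hexp]. apply Rmult_le_compat_r; lra.
Qed.

Lemma quadratic_form_nonneg (P M Q lam : R) :
  0 <= P -> 0 <= Q -> 0 <= M -> M ^ 2 = P * Q -> 0 <= lam ^ 2 * P + 2 * lam * M + Q.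
Proof.
  intros HP HQ HM HPQ. destruct (Req_dec P 0) as [->|HP0]; [nra|].
  apply (Rmult_le_reg_l P); [lra|].
  replace (P * (lam ^ 2 * P + 2 * lam * M + Q)) with ((lam * P + M) ^ 2) by nra.
  rewrite Rmult_0_r. apply pow2_ge_0.
Qed.

Lemma discriminant_le (P M Q : R) :
  0 < P -> (forall lam, 0 <= lam ^ 2 * P + 2 * lam * M + Q) -> M ^ 2 <= P * Q.
Proof.
  intros HP Hq. specialize (Hq (- M / P)).
  replace ((- M / P) ^ 2 * P + 2 * (- M / P) * M + Q) with ((P * Q - M ^ 2) / P) in Hq
    by (field; lra).
  rewrite <- Rle_div_r in Hq by lra. lra.
Qed.

Lemma ex_RInt_pos (f : R -> R) (a b : R) :
  (forall t, 0 < t -> continuous f t) -> 0 < a -> 0 < b -> ex_RInt f a b.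
Proof.
  intros Hc Ha Hb. apply (@ex_RInt_continuous R_CompleteNormedModule).
  intros t Ht. apply Hc. pose proof (Rmin_glb_lt a b 0 Ha Hb). lra.
Qed.

Section NonnegIntegrand.

Variable f : R -> R.
Hypothesis f_cont : forall t, 0 < t -> continuous f t.
Hypothesis f_ge0 : forall t, 0 < t -> 0 <= f t.

Lemma RInt_subinterval_le (a a' b' b : R) :
  0 < a -> a <= a' -> a' <= b' -> b' <= b -> RInt f a' b' <= RInt f a b.
Proof.
  intros Ha Haa Hab Hbb.
  assert (Hex : forall u v, a <= u -> a <= v -> ex_RInt f u v)
    by (intros; apply ex_RInt_pos; auto; lra).
  rewrite <- (@RInt_Chasles R_CompleteNormedModule f a a' b) by (apply Hex; lra).
  rewrite <- (@RInt_Chasles R_CompleteNormedModule f a' b' b) by (apply Hex; lra).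
  assert (0 <= RInt f a a') by (apply RInt_ge_0; [lra | apply Hex; lra | intros; apply f_ge0; lra]).
  assert (0 <= RInt f b' b) by (apply RInt_ge_0; [lra | apply Hex; lra | intros; apply f_ge0; lra]).
  unfold plus; simpl. lra.
Qed.

Lemma is_RInt_gen_pos_bounded (C : R) :
  (forall a b, 0 < a -> a <= b -> RInt f a b <= C) ->
  exists l, is_RInt_gen f (at_right 0) (Rbar_locally p_infty) l /\
    forall a b, 0 < a -> a <= b -> RInt f a b <= l.
Proof.
  intros HC.
  set (E y := exists a b, 0 < a /\ a <= b /\ y = RInt f a b).
  assert (HE : bound E) by (exists C; intros y (a & b & Ha & Hab & ->); auto).
  assert (HE1 : exists y, E y) by (exists (RInt f 1 1), 1, 1; repeat split; lra).
  destruct (completeness E HE HE1) as [l [Hub Hlub]].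
  assert (Hle : forall a b, 0 < a -> a <= b -> RInt f a b <= l)
    by (intros a b Ha Hab; apply Hub; exists a, b; auto).
  exists l. split; [|exact Hle].
  apply filterlimi_locally. intros eps.
  assert (Happrox : exists a0 b0, 0 < a0 /\ a0 <= b0 /\ l - eps < RInt f a0 b0).
  { apply NNPP. intros Hno. assert (l <= l - eps); [|destruct eps; simpl in *; lra].
    apply Hlub. intros y (a & b & Ha & Hab & ->).
    apply Rnot_lt_le. intros Hlt. apply Hno. exists a, b. auto. }
  destruct Happrox as (a0 & b0 & Ha0 & Hab0 & Hlt).
  apply (Filter_prod _ _ _ (fun a => 0 < a < a0) (fun b => b0 < b)).
  - exists (mkposreal a0 Ha0). intros y Hy Hy0.
    apply Rabs_def2 in Hy. unfold minus, plus, opp in Hy; simpl in Hy. lra.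
  - exists b0. auto.
  - intros a b Ha Hb. exists (RInt f a b). split.
    + apply (@RInt_correct R_CompleteNormedModule). apply ex_RInt_pos; auto; lra.
    + assert (RInt f a0 b0 <= RInt f a b) by (apply RInt_subinterval_le; lra).
      assert (RInt f a b <= l) by (apply Hle; lra).
      apply Rabs_def1; unfold minus, plus, opp; simpl; lra.
Qed.

End NonnegIntegrand.

Lemma is_RInt_gen_ge_0 (f : R -> R) (l : R) :
  (forall t, 0 < t -> 0 <= f t) ->
  is_RInt_gen f (at_right 0) (Rbar_locally p_infty) l -> 0 <= l.
Proof.
  intros Hf Hl.
  assert (Hnorm : Rabs l <= l).
  { apply (RInt_gen_norm (Fa := at_right 0) (Fb := Rbar_locally p_infty) f f l l); auto.
    - apply (Filter_prod _ _ _ (fun a => 0 < a < 1) (fun b => 1 < b)).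
      + exists (mkposreal 1 Rlt_0_1). intros y Hy Hy0.
        apply Rabs_def2 in Hy. unfold minus, plus, opp in Hy; simpl in Hy. lra.
      + exists 1. auto.
      + simpl. intros; lra.
    - apply (Filter_prod _ _ _ (fun a => 0 < a) (fun b => 1 < b)).
      + exists (mkposreal 1 Rlt_0_1). auto.
      + exists 1. auto.
      + simpl. intros a b Ha Hb t Ht. rewrite Rabs_pos_eq; [lra | apply Hf; lra]. }
  pose proof (Rabs_pos l). lra.
Qed.

Lemma filterlim_at_right_0_le_id (g : R -> R) :
  (forall t, 0 < t <= 1 -> Rabs (g t) <= t) -> filterlim g (at_right 0) (locally 0).
Proof.
  intros Hg. apply filterlim_locally. intros eps.
  assert (He : 0 < Rmin 1 eps) by (apply Rmin_glb_lt; [lra | apply cond_pos]).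
  exists (mkposreal _ He). intros t Ht Htpos. simpl in Ht.
  apply Rabs_def2 in Ht. unfold minus, plus, opp in Ht; simpl in Ht.
  pose proof (Rmin_l 1 eps). pose proof (Rmin_r 1 eps).
  assert (Hgt := Hg t ltac:(lra)).
  change (Rabs (g t - 0) < eps). rewrite Rminus_0_r. lra.
Qed.

Lemma filterlim_p_infty_le_inv (g : R -> R) (K : R) :
  (forall t, 1 <= t -> Rabs (g t) <= K / t) -> filterlim g (Rbar_locally p_infty) (locally 0).
Proof.
  intros Hg. apply filterlim_locally. intros eps.
  exists (Rmax 1 (Rabs K / eps + 1)). intros t Ht.
  pose proof (Rmax_l 1 (Rabs K / eps + 1)). pose proof (Rmax_r 1 (Rabs K / eps + 1)).
  pose proof (cond_pos eps). pose proof (Rle_abs K).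
  assert (Hgt := Hg t ltac:(lra)).
  change (Rabs (g t - 0) < eps). rewrite Rminus_0_r.
  apply Rle_lt_trans with (K / t); [exact Hgt|].
  apply Rmult_lt_reg_r with t; [lra|].
  unfold Rdiv. rewrite Rmult_assoc, Rinv_l, Rmult_1_r by lra.
  assert (Rabs K / eps * eps = Rabs K) by (field; lra).
  nra.
Qed.

Lemma is_RInt_gen_antiderivative (f F : R -> R) (la lb : R) :
  (forall a b, 0 < a -> 0 < b -> is_RInt f a b (F b - F a)) ->
  filterlim F (at_right 0) (locally la) ->
  filterlim F (Rbar_locally p_infty) (locally lb) ->
  is_RInt_gen f (at_right 0) (Rbar_locally p_infty) (lb - la).
Proof.
  intros HF Ha Hb.
  apply (filterlimi_lim_ext_loc (fun ab => plus (F (snd ab)) (opp (F (fst ab))))).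
  - apply (Filter_prod _ _ _ (fun a => 0 < a) (fun b => 0 < b)).
    + exists (mkposreal 1 Rlt_0_1). auto.
    + exists 0. auto.
    + intros a b Ha' Hb'. apply HF; auto.
  - apply (filterlim_comp_2 (G := locally lb) (H := locally (opp la))
      (fun ab => F (snd ab)) (fun ab => opp (F (fst ab))) plus).
    + exact (filterlim_comp _ _ _ snd F _ _ _ filterlim_snd Hb).
    + apply (filterlim_comp _ _ _ (fun ab => F (fst ab)) opp _ (locally la)).
      * exact (filterlim_comp _ _ _ fst F _ _ _ filterlim_fst Ha).
      * apply (@filterlim_opp _ R_NormedModule).
    + apply (@filterlim_plus _ R_NormedModule).
Qed.

(** * Euler's integral *)

Definition Gamma_integrand (x t : R) : R := Rpower t (x - 1) * exp (- t).

Lemma Gamma_integrand_pos (x t : R) : 0 < Gamma_integrand x t.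
Proof. apply Rmult_lt_0_compat; [apply exp_pos | apply exp_pos]. Qed.

Lemma Gamma_integrand_continuous (x t : R) : 0 < t -> continuous (Gamma_integrand x) t.
Proof.
  intros Ht. apply (@ex_derive_continuous R_AbsRing R_NormedModule).
  unfold Gamma_integrand, Rpower. auto_derive. exact Ht.
Qed.

Lemma Gamma_integrand_le_inv_sq (x : R) : 1 <= x ->
  exists C, 0 <= C /\ forall t, 0 < t -> Gamma_integrand x t <= C / (1 + t) ^ 2.
Proof.
  intros Hx. destruct (Rpower_mul_exp_le (x - 1)) as (K & HK & HKt).
  exists (4 * (K + 1)). split; [lra|]. intros t Ht.
  apply (Rle_div_r _ _ ((1 + t) ^ 2)); [apply pow_lt; lra|].
  pose proof (Gamma_integrand_pos x t).
  destruct (Rle_lt_dec t 1) as [Ht1|Ht1].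
  - assert (Gamma_integrand x t <= 1).
    { unfold Gamma_integrand. rewrite <- (Rmult_1_r 1).
      apply Rmult_le_compat; [left; apply exp_pos | left; apply exp_pos | |].
      - apply Rpower_le_1; lra.
      - rewrite <- exp_0. left; apply exp_increasing; lra. }
    assert ((1 + t) ^ 2 <= 4) by nra. nra.
  - assert (Hle := HKt t ltac:(lra)). apply Rle_div_r in Hle; [|apply pow_lt; lra].
    fold (Gamma_integrand x t) in Hle.
    assert ((1 + t) ^ 2 <= 4 * t ^ 2) by nra. nra.
Qed.

Lemma RInt_inv_sq (C a b : R) : 0 <= a <= b ->
  RInt (fun t => C / (1 + t) ^ 2) a b = C / (1 + a) - C / (1 + b).
Proof.
  intros Hab.
  apply (@is_RInt_unique R_CompleteNormedModule).
  replace (C / (1 + a) - C / (1 + b)) with (- C / (1 + b) - - C / (1 + a)) by (field; lra).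
  apply (@is_RInt_derive R_CompleteNormedModule (fun t => - C / (1 + t))).
  - intros t Ht. rewrite Rmin_left, Rmax_right in Ht by lra.
    auto_derive; [lra | field; lra].
  - intros t Ht. rewrite Rmin_left, Rmax_right in Ht by lra.
    apply (@ex_derive_continuous R_AbsRing R_NormedModule). auto_derive. nra.
Qed.

Lemma Gamma_integral_exists (x : R) : 1 <= x ->
  exists l, is_RInt_gen (Gamma_integrand x) (at_right 0) (Rbar_locally p_infty) l /\
    forall a b, 0 < a -> a <= b -> RInt (Gamma_integrand x) a b <= l.
Proof.
  intros Hx. destruct (Gamma_integrand_le_inv_sq x Hx) as (C & HC & Hle).
  apply is_RInt_gen_pos_bounded with (C := C).
  - apply Gamma_integrand_continuous.
  - intros t _. left; apply Gamma_integrand_pos.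
  - intros a b Ha Hab.
    apply Rle_trans with (RInt (fun t => C / (1 + t) ^ 2) a b).
    + apply RInt_le; [exact Hab | apply ex_RInt_pos; auto; [apply Gamma_integrand_continuous | lra] | |].
      * apply (@ex_RInt_continuous R_CompleteNormedModule). intros t Ht.
        rewrite Rmin_left, Rmax_right in Ht by lra.
        apply (@ex_derive_continuous R_AbsRing R_NormedModule). auto_derive. nra.
      * intros t Ht. apply Hle. lra.
    + rewrite RInt_inv_sq by lra.
      assert (0 <= C / (1 + b)) by (apply Rdiv_le_0_compat; lra).
      assert (C / (1 + a) <= C) by (apply (Rle_div_l _ _ (1 + a)); nra).
      lra.
Qed.

Lemma is_RInt_gen_Gamma (x : R) : 1 <= x ->
  is_RInt_gen (Gamma_integrand x) (at_right 0) (Rbar_locally p_infty) (Gamma x).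
Proof.
  intros Hx. destruct (Gamma_integral_exists x Hx) as (l & Hl & _).
  replace (Gamma x) with l; [exact Hl|].
  symmetry. apply (is_RInt_gen_unique (Gamma_integrand x)). exact Hl.
Qed.

Lemma RInt_Gamma_integrand_le (x a b : R) : 1 <= x -> 0 < a -> a <= b ->
  RInt (Gamma_integrand x) a b <= Gamma x.
Proof.
  intros Hx. destruct (Gamma_integral_exists x Hx) as (l & Hl & Hle).
  replace (Gamma x) with l; [exact (Hle a b)|].
  symmetry. apply (is_RInt_gen_unique (Gamma_integrand x)). exact Hl.
Qed.

Lemma Gamma_pos (x : R) : 1 <= x -> 0 < Gamma x.
Proof.
  intros Hx. apply Rlt_le_trans with (RInt (Gamma_integrand x) 1 2).
  - apply RInt_gt_0; [lra | intros; apply Gamma_integrand_pos |].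
    intros t Ht. apply Gamma_integrand_continuous. lra.
  - apply RInt_Gamma_integrand_le; lra.
Qed.

Lemma Rpower_mul_exp_derive (x t : R) : 0 < t ->
  is_derive (fun s => Rpower s x * exp (- s)) t
    (x * Gamma_integrand x t - Gamma_integrand (x + 1) t).
Proof.
  intros Ht. unfold Gamma_integrand, Rpower. auto_derive; [lra|].
  replace (x + 1 - 1) with x by ring.
  replace ((x - 1) * ln t) with (x * ln t + - ln t) by ring.
  rewrite exp_plus, (exp_Ropp (ln t)), exp_ln by lra. field. lra.
Qed.

Lemma filterlim_Rpower_mul_exp_0 (x : R) : 1 <= x ->
  filterlim (fun t => Rpower t x * exp (- t)) (at_right 0) (locally 0).
Proof.
  intros Hx. apply filterlim_at_right_0_le_id. intros t Ht.
  rewrite Rabs_pos_eq by (left; apply Rmult_lt_0_compat; apply exp_pos).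
  assert (Rpower t x <= t) by (apply Rpower_le_self; lra).
  assert (exp (- t) <= 1) by (rewrite <- exp_0; left; apply exp_increasing; lra).
  pose proof (exp_pos (x * ln t)). unfold Rpower in *. nra.
Qed.

Lemma filterlim_Rpower_mul_exp_p_infty (x : R) :
  filterlim (fun t => Rpower t x * exp (- t)) (Rbar_locally p_infty) (locally 0).
Proof.
  destruct (Rpower_mul_exp_le x) as (K & HK & HKt).
  apply (filterlim_p_infty_le_inv _ K). intros t Ht.
  rewrite Rabs_pos_eq by (left; apply Rmult_lt_0_compat; apply exp_pos).
  apply Rle_trans with (K / t ^ 2); [apply HKt; lra|].
  apply Rmult_le_compat_l; [lra|]. apply Rinv_le_contravar; [lra|]. nra.
Qed.

Lemma Gamma_succ (x : R) : 1 <= x -> Gamma (x + 1) = x * Gamma x.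
Proof.
  intros Hx. assert (Hx1 : 1 <= x + 1) by lra.
  set (h t := minus (scal x (Gamma_integrand x t)) (Gamma_integrand (x + 1) t)).
  assert (Hzero : is_RInt_gen h (at_right 0) (Rbar_locally p_infty) (0 - 0)).
  { apply is_RInt_gen_antiderivative with (F := fun t => Rpower t x * exp (- t)).
    - intros a b Ha Hb. pose proof (Rmin_glb_lt a b 0 Ha Hb).
      apply (@is_RInt_derive R_CompleteNormedModule (fun t => Rpower t x * exp (- t))).
      + intros t Ht. apply Rpower_mul_exp_derive. lra.
      + intros t Ht. unfold h.
        apply (@continuous_minus R_UniformSpace R_AbsRing R_NormedModule);
          [apply (@continuous_scal R_UniformSpace R_AbsRing R_NormedModule);
           [apply continuous_const|] |];
          apply Gamma_integrand_continuous; lra.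
    - apply filterlim_Rpower_mul_exp_0. exact Hx.
    - apply filterlim_Rpower_mul_exp_p_infty. }
  assert (Hdiff := is_RInt_gen_minus _ _ _ _
                     (is_RInt_gen_scal _ x _ (is_RInt_gen_Gamma x Hx))
                     (is_RInt_gen_Gamma (x + 1) Hx1)).
  apply (is_RInt_gen_unique h) in Hzero. apply (is_RInt_gen_unique h) in Hdiff.
  rewrite Hzero in Hdiff.
  unfold minus, plus, opp, scal in Hdiff; simpl in Hdiff; unfold mult in Hdiff; simpl in Hdiff.
  lra.
Qed.

Lemma Gamma_integrand_midpoint (p q t : R) :
  Gamma_integrand ((p + q) / 2) t ^ 2 = Gamma_integrand p t * Gamma_integrand q t.
Proof.
  unfold Gamma_integrand, Rpower. simpl. rewrite Rmult_1_r, <- !exp_plus.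
  f_equal. field.
Qed.

Lemma Gamma_midpoint_sq_le (p q : R) : 1 <= p -> 1 <= q ->
  Gamma ((p + q) / 2) ^ 2 <= Gamma p * Gamma q.
Proof.
  intros Hp Hq. set (m := (p + q) / 2). assert (Hm : 1 <= m) by (unfold m; lra).
  apply discriminant_le; [apply Gamma_pos; exact Hp|]. intros lam.
  assert (Hcomb := is_RInt_gen_plus _ _ _ _
    (is_RInt_gen_plus _ _ _ _ (is_RInt_gen_scal _ (lam ^ 2) _ (is_RInt_gen_Gamma p Hp))
                              (is_RInt_gen_scal _ (2 * lam) _ (is_RInt_gen_Gamma m Hm)))
    (is_RInt_gen_Gamma q Hq)).
  apply is_RInt_gen_ge_0 in Hcomb; [exact Hcomb|].
  intros t _. unfold plus, scal; simpl; unfold mult; simpl.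
  apply quadratic_form_nonneg; try (left; apply Gamma_integrand_pos).
  apply Gamma_integrand_midpoint.
Qed.

(** * The ratio Omega_(n-1) / Omega_n *)

Definition Wendel_ratio (x : R) : R := (Gamma (x + 1) / Gamma (x + / 2)) ^ 2 / x.

Lemma Wendel_ratio_pos (x : R) : / 2 <= x -> 0 < Wendel_ratio x.
Proof.
  intros Hx. unfold Wendel_ratio.
  assert (0 < Gamma (x + 1)) by (apply Gamma_pos; lra).
  assert (0 < Gamma (x + / 2)) by (apply Gamma_pos; lra).
  apply Rdiv_lt_0_compat; [apply pow_lt, Rdiv_lt_0_compat|]; lra.
Qed.

Lemma Wendel_ratio_succ (x : R) : / 2 <= x ->
  Wendel_ratio x / Wendel_ratio (x + 1) = 1 + / (4 * x * (x + 1)).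
Proof.
  intros Hx. unfold Wendel_ratio.
  assert (0 < Gamma (x + 1)) by (apply Gamma_pos; lra).
  assert (0 < Gamma (x + / 2)) by (apply Gamma_pos; lra).
  replace (x + 1 + / 2) with (x + / 2 + 1) by ring.
  rewrite (Gamma_succ (x + 1)), (Gamma_succ (x + / 2)) by lra.
  field. repeat split; lra.
Qed.

Lemma Wendel_ratio_bounds (x : R) : 1 <= x -> 1 <= Wendel_ratio x <= 1 + / (2 * x).
Proof.
  intros Hx.
  assert (G0 : 0 < Gamma x) by (apply Gamma_pos; lra).
  assert (Gh : 0 < Gamma (x + / 2)) by (apply Gamma_pos; lra).
  assert (Hlo := Gamma_midpoint_sq_le x (x + 1) ltac:(lra) ltac:(lra)).
  assert (Hhi := Gamma_midpoint_sq_le (x + / 2) (x + / 2 + 1) ltac:(lra) ltac:(lra)).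
  replace ((x + (x + 1)) / 2) with (x + / 2) in Hlo by field.
  replace ((x + / 2 + (x + / 2 + 1)) / 2) with (x + 1) in Hhi by field.
  rewrite (Gamma_succ x) in Hlo by lra. rewrite (Gamma_succ (x + / 2)) in Hhi by lra.
  replace (Wendel_ratio x) with (Gamma (x + 1) ^ 2 / (x * Gamma (x + / 2) ^ 2))
    by (unfold Wendel_ratio; field; lra).
  split.
  - apply Rle_div_r; [nra|]. rewrite (Gamma_succ x) by lra. nra.
  - apply Rle_div_l; [nra|].
    replace ((1 + / (2 * x)) * (x * Gamma (x + / 2) ^ 2))
      with (Gamma (x + / 2) * ((x + / 2) * Gamma (x + / 2))) by (field; lra).
    exact Hhi.
Qed.

Lemma ln_Wendel_ratio_succ (x : R) : / 2 <= x ->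
  ln (Wendel_ratio x) - ln (Wendel_ratio (x + 1)) = ln (1 + / (4 * x * (x + 1))).
Proof.
  intros Hx. rewrite <- ln_div, Wendel_ratio_succ by (try apply Wendel_ratio_pos; lra).
  reflexivity.
Qed.

Lemma ln_Wendel_ratio_bounds (x : R) : 1 <= x -> 0 <= ln (Wendel_ratio x) <= / (2 * x).
Proof.
  intros Hx. destruct (Wendel_ratio_bounds x Hx) as [Hlo Hhi].
  split.
  - rewrite <- ln_1. apply ln_le; lra.
  - rewrite <- (ln_exp (/ (2 * x))). apply ln_le; [lra|].
    pose proof (exp_ineq1_le (/ (2 * x))). lra.
Qed.

Definition Omega_rem (n : nat) : R := / 2 * ln (Wendel_ratio (INR n / 2)).

Lemma ln_Omega_ratio (n : nat) : (1 <= n)%nat ->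
  ln (Omega (n - 1) / Omega n) = / 2 * ln (INR n / (2 * PI)) + Omega_rem n.
Proof.
  intros Hn. assert (H1 : 1 <= INR n) by (apply (le_INR 1); exact Hn).
  pose proof PI_RGT_0 as Hpi.
  set (x := INR n / 2).
  assert (Gh : 0 < Gamma (x + / 2)) by (apply Gamma_pos; unfold x; lra).
  assert (G1 : 0 < Gamma (x + 1)) by (apply Gamma_pos; unfold x; lra).
  assert (Hpow : forall z, 0 < Rpower PI z) by (intros; apply exp_pos).
  unfold Omega_rem, Omega, Wendel_ratio. rewrite minus_INR by exact Hn.
  replace ((INR n - INR 1) / 2 + 1) with (x + / 2) by (simpl; unfold x; field).
  replace (INR n / (2 * PI)) with (x / PI) by (unfold x; field; lra).
  fold x.
  rewrite !ln_div, !ln_Rpower, ln_pow, ln_div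
    by (repeat first [apply Rdiv_lt_0_compat | apply pow_lt]; auto; unfold x; lra).
  simpl INR. unfold x. field.
Qed.

Lemma INR_add_2 (n : nat) : INR (n + 2) = INR n + 2.
Proof. rewrite plus_INR. simpl. ring. Qed.

Lemma Omega_rem_step (n : nat) : (1 <= n)%nat ->
  Omega_rem n - Omega_rem (n + 2) = / 2 * ln (1 + / (INR n * (INR n + 2))).
Proof.
  intros Hn. assert (H1 : 1 <= INR n) by (apply (le_INR 1); exact Hn).
  unfold Omega_rem. rewrite INR_add_2.
  replace ((INR n + 2) / 2) with (INR n / 2 + 1) by field.
  replace (INR n * (INR n + 2)) with (4 * (INR n / 2) * (INR n / 2 + 1)) by field.
  rewrite <- ln_Wendel_ratio_succ by lra. ring.
Qed.

Lemma Omega_rem_bounds (n : nat) : (2 <= n)%nat -> 0 <= Omega_rem n <= / (2 * INR n).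
Proof.
  intros Hn. assert (H2 : 2 <= INR n) by (apply (le_INR 2); exact Hn).
  destruct (ln_Wendel_ratio_bounds (INR n / 2)) as [Hlo Hhi]; [lra|].
  unfold Omega_rem. replace (/ (2 * INR n)) with (/ 2 * / (2 * (INR n / 2))) by (field; lra).
  lra.
Qed.

Lemma nonneg_of_derive_nonneg (h h' : R -> R) (u : R) :
  0 <= u -> h 0 = 0 ->
  (forall x, 0 <= x <= u -> is_derive h x (h' x)) ->
  (forall x, 0 <= x <= u -> 0 <= h' x) -> 0 <= h u.
Proof.
  intros Hu H0 Hd Hpos.
  destruct (MVT_gen h 0 u h') as (c & Hc & Hmvt).
  - intros x Hx. rewrite Rmin_left, Rmax_right in Hx by lra. apply Hd. lra.
  - intros x Hx. rewrite Rmin_left, Rmax_right in Hx by lra.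
    apply continuity_pt_filterlim, (@ex_derive_continuous R_AbsRing R_NormedModule).
    exists (h' x). apply Hd. lra.
  - rewrite Rmin_left, Rmax_right in Hc by lra.
    assert (Hc' := Hpos c Hc). rewrite H0 in Hmvt. nra.
Qed.

Lemma ln_1p_ge (u : R) : 0 <= u -> u - u ^ 2 / 2 + u ^ 3 / 3 - u ^ 4 / 4 <= ln (1 + u).
Proof.
  intros Hu.
  assert (H := nonneg_of_derive_nonneg
                 (fun x => ln (1 + x) - (x - x ^ 2 / 2 + x ^ 3 / 3 - x ^ 4 / 4))
                 (fun x => x ^ 4 / (1 + x)) u Hu).
  cbv beta in H. rewrite Rplus_0_r, ln_1 in H.
  assert (0 <= ln (1 + u) - (u - u ^ 2 / 2 + u ^ 3 / 3 - u ^ 4 / 4)); [|lra].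
  apply H.
  - field.
  - intros x Hx. auto_derive; [lra | field; lra].
  - intros x Hx. apply Rdiv_le_0_compat; [apply pow_le|]; lra.
Qed.

Lemma ln_1p_le (u : R) : 0 <= u -> ln (1 + u) <= u - u ^ 2 / 2 + u ^ 3 / 3 - u ^ 4 / 4 + u ^ 5 / 5.
Proof.
  intros Hu.
  assert (H := nonneg_of_derive_nonneg
                 (fun x => x - x ^ 2 / 2 + x ^ 3 / 3 - x ^ 4 / 4 + x ^ 5 / 5 - ln (1 + x))
                 (fun x => x ^ 5 / (1 + x)) u Hu).
  cbv beta in H. rewrite Rplus_0_r, ln_1 in H.
  assert (0 <= u - u ^ 2 / 2 + u ^ 3 / 3 - u ^ 4 / 4 + u ^ 5 / 5 - ln (1 + u)); [|lra].
  apply H.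
  - field.
  - intros x Hx. auto_derive; [lra | field; lra].
  - intros x Hx. apply Rdiv_le_0_compat; [apply pow_le|]; lra.
Qed.

Definition a_corr (y : R) : R :=
  1 / (4 * y) - 1 / (24 * y ^ 3) + 1 / (20 * y ^ 5) - 17 / (112 * y ^ 7).

Lemma a_corr_abs_le (y : R) : 1 <= y -> Rabs (a_corr y) <= / (2 * y).
Proof.
  intros Hy. set (z := / y).
  assert (Hz : 0 < z <= 1).
  { unfold z. split; [apply Rinv_0_lt_compat; lra|].
    rewrite <- Rinv_1. apply Rinv_le_contravar; lra. }
  replace (a_corr y) with (z / 4 - z ^ 3 / 24 + z ^ 5 / 20 - 17 * z ^ 7 / 112)
    by (unfold a_corr, z; field; lra).
  replace (/ (2 * y)) with (z / 2) by (unfold z; field; lra).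
  assert (0 <= z ^ 2 <= 1) by (split; nra).
  assert (0 <= z ^ 3 <= z) by (split; nra).
  assert (0 <= z ^ 5 <= z) by (split; nra).
  assert (0 <= z ^ 7 <= z) by (split; nra).
  apply Rabs_le. lra.
Qed.

(* The substitution y = m + 1 makes all coefficients of the numerators below positive. *)
Lemma a_corr_step_lt (y : R) : 1 <= y ->
  a_corr y - a_corr (y + 2) < / 2 * ln (1 + / (y * (y + 2))).
Proof.
  intros Hy. set (u := / (y * (y + 2))).
  assert (Hln := ln_1p_ge u ltac:(unfold u; left; apply Rinv_0_lt_compat; nra)).
  set (m := y - 1). assert (Hm : 0 <= m) by (unfold m; lra).
  assert (Hid : / 2 * (u - u ^ 2 / 2 + u ^ 3 / 3 - u ^ 4 / 4) - a_corr y + a_corr (y + 2)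
    = (9101 + 17696 * m + 13048 * m ^ 2 + 4312 * m ^ 3 + 539 * m ^ 4)
      / (35 * (m + 1) ^ 7 * (m + 3) ^ 7)).
  { unfold u, m, a_corr. field. lra. }
  assert (0 < (9101 + 17696 * m + 13048 * m ^ 2 + 4312 * m ^ 3 + 539 * m ^ 4)
              / (35 * (m + 1) ^ 7 * (m + 3) ^ 7)).
  { apply Rdiv_lt_0_compat.
    - assert (0 <= m ^ 2) by (apply pow_le; lra). assert (0 <= m ^ 3) by (apply pow_le; lra).
      assert (0 <= m ^ 4) by (apply pow_le; lra). lra.
    - repeat apply Rmult_lt_0_compat; try lra; apply pow_lt; lra. }
  lra.
Qed.

Lemma a_corr_step_gt (y : R) : 1 <= y ->
  / 2 * ln (1 + / (y * (y + 2)))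
  < a_corr y - a_corr (y + 2) + 31 / (36 * y ^ 9) - 31 / (36 * (y + 2) ^ 9).
Proof.
  intros Hy. set (u := / (y * (y + 2))).
  assert (Hln := ln_1p_le u ltac:(unfold u; left; apply Rinv_0_lt_compat; nra)).
  set (m := y - 1). assert (Hm : 0 <= m) by (unfold m; lra).
  set (N := 919802 + 2520360 * m + 2926890 * m ^ 2 + 1844592 * m ^ 3 + 665694 * m ^ 4
            + 130536 * m ^ 5 + 10878 * m ^ 6).
  assert (Hid : a_corr y - a_corr (y + 2) + 31 / (36 * y ^ 9) - 31 / (36 * (y + 2) ^ 9)
    - / 2 * (u - u ^ 2 / 2 + u ^ 3 / 3 - u ^ 4 / 4 + u ^ 5 / 5)
    = N / (63 * (m + 1) ^ 9 * (m + 3) ^ 9)).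
  { unfold N, u, m, a_corr. field. lra. }
  assert (0 < N / (63 * (m + 1) ^ 9 * (m + 3) ^ 9)).
  { apply Rdiv_lt_0_compat.
    - assert (0 <= m ^ 2) by (apply pow_le; lra). assert (0 <= m ^ 3) by (apply pow_le; lra).
      assert (0 <= m ^ 4) by (apply pow_le; lra). assert (0 <= m ^ 5) by (apply pow_le; lra).
      assert (0 <= m ^ 6) by (apply pow_le; lra). unfold N. lra.
    - repeat apply Rmult_lt_0_compat; try lra; apply pow_lt; lra. }
  lra.
Qed.

Lemma nonneg_of_ge_neg_inv (c : R) : (forall k : nat, - / INR (S k) <= c) -> 0 <= c.
Proof.
  intros Hc. apply Rnot_lt_le. intros Hneg.
  destruct (INR_archimed (- c) 1) as [k Hk]; [lra|].
  assert (Hk1 : 0 < INR (S k)) by apply lt_0_INR, Nat.lt_0_succ.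
  assert (Hck := Hc k). rewrite S_INR in Hk1, Hck.
  apply (Rmult_le_compat_l (INR k + 1)) in Hck; [|lra].
  rewrite Ropp_mult_distr_r_reverse, Rinv_r in Hck by lra. nra.
Qed.

Lemma pos_of_step2_decreasing (f : nat -> R) :
  (forall n, (1 <= n)%nat -> f (n + 2)%nat < f n) ->
  (forall n, (2 <= n)%nat -> - / INR n <= f n) ->
  forall n, (1 <= n)%nat -> 0 < f n.
Proof.
  intros Hstep Hlow n Hn.
  assert (Hmono : forall m k, (1 <= m)%nat -> f (m + 2 * k)%nat <= f m).
  { intros m k Hm. induction k as [|k IH].
    - rewrite Nat.mul_0_r, Nat.add_0_r. lra.
    - replace (m + 2 * S k)%nat with (m + 2 * k + 2)%nat by lia.
      specialize (Hstep (m + 2 * k)%nat ltac:(lia)). lra. }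
  assert (Hnext : 0 <= f (n + 2)%nat).
  { apply nonneg_of_ge_neg_inv. intros k.
    apply Rle_trans with (f (n + 2 + 2 * k)%nat); [|apply Hmono; lia].
    apply Rle_trans with (- / INR (n + 2 + 2 * k)); [|apply Hlow; lia].
    apply Ropp_le_contravar, Rinv_le_contravar; [apply lt_0_INR; lia | apply le_INR; lia]. }
  specialize (Hstep n Hn). lra.
Qed.

Lemma a_corr_lt_Omega_rem (n : nat) : (1 <= n)%nat -> a_corr (INR n) < Omega_rem n.
Proof.
  intros Hn. apply Rlt_0_minus.
  revert n Hn. apply (pos_of_step2_decreasing (fun n => Omega_rem n - a_corr (INR n))).
  - intros n Hn. assert (H1 : 1 <= INR n) by (apply (le_INR 1); exact Hn).
    assert (Hstep := Omega_rem_step n Hn). assert (Hcorr := a_corr_step_lt (INR n) H1).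
    rewrite INR_add_2. lra.
  - intros n Hn. assert (H2 : 2 <= INR n) by (apply (le_INR 2); exact Hn).
    destruct (Omega_rem_bounds n Hn) as [Hlo _].
    assert (Hcorr := a_corr_abs_le (INR n) ltac:(lra)). apply Rabs_le_between in Hcorr.
    assert (/ (2 * INR n) <= / INR n) by (apply Rinv_le_contravar; lra). lra.
Qed.

Lemma Omega_rem_lt_b_corr (n : nat) : (1 <= n)%nat ->
  Omega_rem n < a_corr (INR n) + 31 / (36 * INR n ^ 9).
Proof.
  intros Hn. apply Rlt_0_minus.
  revert n Hn.
  apply (pos_of_step2_decreasing (fun n => a_corr (INR n) + 31 / (36 * INR n ^ 9) - Omega_rem n)).
  - intros n Hn. assert (H1 : 1 <= INR n) by (apply (le_INR 1); exact Hn).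
    assert (Hstep := Omega_rem_step n Hn). assert (Hcorr := a_corr_step_gt (INR n) H1).
    rewrite INR_add_2. lra.
  - intros n Hn. assert (H2 : 2 <= INR n) by (apply (le_INR 2); exact Hn).
    destruct (Omega_rem_bounds n Hn) as [_ Hhi].
    assert (Hcorr := a_corr_abs_le (INR n) ltac:(lra)). apply Rabs_le_between in Hcorr.
    assert (0 <= 31 / (36 * INR n ^ 9))
      by (apply Rdiv_le_0_compat; [lra | apply Rmult_lt_0_compat; [lra | apply pow_lt; lra]]).
    assert (/ (2 * INR n) = / 2 * / INR n) by (field; lra). lra.
Qed.

Theorem theorem7 (n : nat) (hn : (1 <= n)%nat) :
  a_fun n < ln (Omega (n - 1) / Omega n) < b_fun n.
Proof.
  assert (Ha : a_fun n = / 2 * ln (INR n / (2 * PI)) + a_corr (INR n))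
    by (unfold a_fun, a_corr; ring).
  unfold b_fun. rewrite Ha, ln_Omega_ratio by exact hn.
  pose proof (a_corr_lt_Omega_rem n hn). pose proof (Omega_rem_lt_b_corr n hn).
  lra.
Qed.
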